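(* Let $\alpha\ge1$. Suppose valuation functions are arbitrary and for each item $j\in M$ the cost function $c_j:2^N\to\mathbb{R}_{\ge0}$ is non-decreasing, subadditive and $\alpha$-average max-bounded. Then the Sequential Mechanism satisfies IR, NPT and WGSP, is budget-balanced, and is $\alpha$-approximate with respect to the social cost.
   Context: Players $N=\{1,\dots,n\}$, items $M=\{1,\dots,m\}$. For an allocation $B=(B_1,\dots,B_n)$, $C(B)=\sum_{j\in M}c_j(\{i:j\in B_i\})$. Subadditive: $c(S\cup T)\le c(S)+c(T)$. $c$ is $\alpha$-average max-bounded if for every nonempty $T\subseteq N$, $\alpha\frac{c(T)}{|T|}\ge\max_{i\in T}c(\{i\})$. A mechanism maps declared valuations $b$ to an allocation $A$ and payments $p$; utility $u_i=v_i(A_i)-p_i$ with true valuation $v_i$. IR: $p_i\le b_i(A_i)$; NPT: $p_i\ge0$; WGSP: for every coalition $Q$, true $v_Q$, reports $v_{-Q}$ of others, there is no $b_Q$ with $u_i(b_Q,v_{-Q})>u_i(v_Q,v_{-Q})$ for all $i\in Q$. Budget-balanced: $\sum_ip_i=C(A)$. Social cost $\pi(A)=C(A)+\sum_i(v_i(M)-v_i(A_i))$; $\rho$-approximate: $\pi(A)\le\rho\min_{A'}\pi(A')$ for every truthfully reported profile. Sequential Mechanism: fix an order $1,\dots,n$ of the players. For $i=1,\dots,n$: define $p_i(S)=C(A_1,\dots,A_{i-1},S,\emptyset,\dots,\emptyset)-C(A_1,\dots,A_{i-1},\emptyset,\dots,\emptyset)$ and let $A_i$ be the lexicographically smallest maximizer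 of $b_i(S)-p_i(S)$ over $S\subseteq M$. Output $A=(A_i)$ and payments $p_i=p_i(A_i)$. *)

From HB Require Import structures.
From mathcomp Require Import all_boot all_order all_algebra.
Set Implicit Arguments. Unset Strict Implicit. Unset Printing Implicit Defensive.
Import Order.TTheory GRing.Theory Num.Theory.
Local Open Scope ring_scope.

Section Defs.
Variables (R : realFieldType) (n m : nat).

(* players are 'I_n, items are 'I_m *)
Notation alloc := {ffun 'I_n -> {set 'I_m}}.

Definition cost (c : 'I_m -> {set 'I_n} -> R) (B : alloc) : R :=
  \sum_(j < m) c j [set i | j \in B i].

Definition nondecreasing_cost (f : {set 'I_n} -> R) :=
  forall S T : {set 'I_n}, S \subset T -> f S <= f T.
Definition subadditive (f : {set 'I_n} -> R) :=
  forall S T : {set 'I_n}, f (S :|: T) <= f S + f T.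
Definition avg_max_bounded (alpha : R) (f : {set 'I_n} -> R) :=
  forall T : {set 'I_n}, T != set0 ->
    forall i, i \in T -> f [set i] <= alpha * f T / #|T|%:R.

Definition valuation (v : {set 'I_m} -> R) :=
  v set0 = 0 /\ forall S T : {set 'I_m}, S \subset T -> v S <= v T.

(* lexicographic key: characteristic vector (item 0 first) read as a binary
   number; lexicographic order on bundles = order on lexkey *)
Definition lexkey (S : {set 'I_m}) : nat := (\sum_(j in S) 2 ^ (m.-1 - j))%N.

Definition lexArgmax (f : {set 'I_m} -> R) : {set 'I_m} :=
  let S0 := [arg max_(S > set0) f S]%O in
  [arg min_(S < S0 | [forall T, f T <= f S]) lexkey S].

Definition upd (B : alloc) (i : 'I_n) (S : {set 'I_m}) : alloc :=
  [ffun k => if k == i then S else B k].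

(* p_i(S) given the allocation B of the previous players (later ones empty) *)
Definition price (c : 'I_m -> {set 'I_n} -> R) (B : alloc) (i : 'I_n)
  (S : {set 'I_m}) : R := cost c (upd B i S) - cost c B.

Fixpoint seqAlloc (c : 'I_m -> {set 'I_n} -> R)
  (b : 'I_n -> {set 'I_m} -> R) (k : nat) : alloc :=
  match k with
  | 0 => [ffun => set0]
  | k'.+1 =>
      let B := seqAlloc c b k' in
      match @insub _ (fun x => x < n)%N 'I_n k' with
      | Some i => upd B i (lexArgmax (fun S => b i S - price c B i S))
      | None => B
      end
  end.

Definition mechAlloc c b : alloc := seqAlloc c b n.
Definition mechPay c b (i : 'I_n) : R :=
  price c (seqAlloc c b i) i (mechAlloc c b i).

Definition util c (v b : 'I_n -> {set 'I_m} -> R) (i : 'I_n) : R :=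
  v i (mechAlloc c b i) - mechPay c b i.

Definition override (Q : {set 'I_n}) (d b : 'I_n -> {set 'I_m} -> R) :=
  fun i => if i \in Q then d i else b i.

Definition socialCost c (v : 'I_n -> {set 'I_m} -> R) (A : alloc) : R :=
  cost c A + \sum_(i < n) (v i setT - v i (A i)).

End Defs.

From HB Require Import structures.
From mathcomp Require Import all_boot all_order all_algebra.
From mathcomp Require Import lra.
Set Implicit Arguments. Unset Strict Implicit. Unset Printing Implicit Defensive.
Import Order.TTheory GRing.Theory Num.Theory.
Local Open Scope ring_scope.

(* When player i chooses, all later players still hold the empty bundle, so i's
   price for S only adds i to the users of each item in S.  Monotonicity makes
   it nonnegative, subadditivity bounds it by the stand-alone costs
   c_j({i}), j in S, and prices telescope to the final cost.  A truthful player
   maximizes utility against the prices it faces; in a deviating coalition the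
   earliest member faces the same prices as under truthful reports, so it cannot
   strictly gain.  For the approximation, each player's utility at its choice
   dominates that at its bundle in any allocation A', and the stand-alone costs
   of the users of an item sum to at most alpha times its cost. *)

Lemma lexArgmax_max (R : realFieldType) m (f : {set 'I_m} -> R) T :
  f T <= f (lexArgmax f).
Proof.
rewrite /lexArgmax; case: arg_maxP => // S0 _ S0max.
case: arg_minnP => [|S /forallP Smax _]; last exact: Smax.
by apply/forallP => U; apply: S0max.
Qed.

Lemma sum_singleton_le (R : realFieldType) n alpha (f : {set 'I_n} -> R)
    (T : {set 'I_n}) :
  f set0 = 0 -> avg_max_bounded alpha f ->
  \sum_(i in T) f [set i] <= alpha * f T.
Proof.
move=> f0 f_avg; have [->|T0] := eqVneq T set0; first by rewrite big_set0 f0 mulr0.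
apply: le_trans (_ : \sum_(i in T) (alpha * f T / #|T|%:R) <= _).
  by apply: ler_sum => i iT; apply: f_avg.
rewrite sumr_const -[_ *+ #|_|]mulr_natr divfK // pnatr_eq0 -lt0n card_gt0; exact: T0.
Qed.

Section Prices.
Variables (R : realFieldType) (n m : nat) (c : 'I_m -> {set 'I_n} -> R).
Implicit Types (B : {ffun 'I_n -> {set 'I_m}}) (i : 'I_n) (S : {set 'I_m}).

Definition users B (j : 'I_m) : {set 'I_n} := [set i | j \in B i].

Lemma users_upd B i S j : B i = set0 ->
  users (upd B i S) j = if j \in S then i |: users B j else users B j.
Proof.
move=> Bi; apply/setP => k; rewrite /users.
by case: ifP => jS; rewrite !inE ffunE; case: eqP => [->|_] //=; rewrite jS Bi inE.
Qed.

Lemma cost_empty : (forall j, c j set0 = 0) -> cost c [ffun=> set0] = 0.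
Proof.
move=> c0; rewrite /cost big1 // => j _; rewrite -/(users _ j).
have -> : users [ffun=> set0] j = set0 by apply/setP => k; rewrite !inE ffunE inE.
exact: c0.
Qed.

Lemma priceE B i S :
  price c B i S = \sum_(j < m) (c j (users (upd B i S) j) - c j (users B j)).
Proof. by rewrite /price /cost sumrB. Qed.

Lemma price_set0 B i : B i = set0 -> price c B i set0 = 0.
Proof. by move=> Bi; rewrite priceE big1 // => j _; rewrite users_upd // inE subrr. Qed.

Lemma price_ge0 B i S : (forall j, nondecreasing_cost (c j)) ->
  B i = set0 -> 0 <= price c B i S.
Proof.
move=> cmono Bi; rewrite priceE; apply: sumr_ge0 => j _.
by rewrite subr_ge0 users_upd //; case: ifP => // _; apply/cmono/subsetUr.
Qed.

Lemma price_le_standalone B i S : (forall j, subadditive (c j)) ->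
  B i = set0 -> price c B i S <= \sum_(j < m) (if j \in S then c j [set i] else 0).
Proof.
move=> csub Bi; rewrite priceE; apply: ler_sum => j _.
by rewrite users_upd //; case: ifP => _; [rewrite lerBlDr; apply: csub | rewrite subrr].
Qed.

Lemma sum_price_le_cost alpha (Bs : 'I_n -> {ffun 'I_n -> {set 'I_m}})
    (A' : {ffun 'I_n -> {set 'I_m}}) :
  (forall j, c j set0 = 0) -> (forall j, subadditive (c j)) ->
  (forall j, avg_max_bounded alpha (c j)) -> (forall i, Bs i i = set0) ->
  \sum_i price c (Bs i) i (A' i) <= alpha * cost c A'.
Proof.
move=> c0 csub cavg Bs0.
apply: le_trans (_ : \sum_i \sum_(j < m) (if j \in A' i then c j [set i] else 0) <= _).
  by apply: ler_sum => i _; apply: price_le_standalone.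
rewrite exchange_big /cost mulr_sumr; apply: ler_sum => j _.
apply: le_trans (sum_singleton_le _ (c0 j) (cavg j)).
by rewrite [X in _ <= X]big_mkcond; apply: ler_sum => i _; rewrite inE.
Qed.

End Prices.

Section SequentialMechanism.
Variables (R : realFieldType) (n m : nat) (c : 'I_m -> {set 'I_n} -> R).
Implicit Types (b : 'I_n -> {set 'I_m} -> R) (i : 'I_n).

Definition seqBundle b i : {set 'I_m} :=
  lexArgmax (fun S => b i S - price c (seqAlloc c b i) i S).

Lemma seqAllocS b i : seqAlloc c b i.+1 = upd (seqAlloc c b i) i (seqBundle b i).
Proof. by rewrite /= insubT //= => i_lt; congr upd; congr seqBundle; apply: val_inj. Qed.

Lemma seqAlloc_unassigned b k i : (k <= i)%N -> seqAlloc c b k i = set0.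
Proof.
elim: k => [|k IHk] k_le /=; first by rewrite ffunE.
case: insubP => [j _ jk|_]; last exact/IHk/ltnW.
rewrite ffunE; case: eqP => [ji|_]; last exact/IHk/ltnW.
by move: k_le; rewrite ji jk ltnn.
Qed.

Lemma seqAlloc_assigned b k i : (i < k)%N -> seqAlloc c b k i = seqBundle b i.
Proof.
elim: k => [|k IHk] //; rewrite ltnS leq_eqVlt.
have [<- _|i_neq_k /= i_lt_k] := eqVneq (nat_of_ord i) k.
  by rewrite seqAllocS ffunE eqxx.
case: insubP => [j _ jk|_]; last exact: IHk.
rewrite ffunE; case: eqP => [ij|_]; last exact: IHk.
by rewrite ij jk eqxx in i_neq_k.
Qed.

Lemma mechAllocE b i : mechAlloc c b i = seqBundle b i.
Proof. exact: seqAlloc_assigned. Qed.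

Lemma mechPayE b i : mechPay c b i = price c (seqAlloc c b i) i (seqBundle b i).
Proof. by rewrite /mechPay mechAllocE. Qed.

Lemma seqAlloc_self b i : seqAlloc c b i i = set0.
Proof. exact: seqAlloc_unassigned. Qed.

Lemma eq_seqAlloc b1 b2 k :
  (forall i, (i < k)%N -> b1 i = b2 i) -> seqAlloc c b1 k = seqAlloc c b2 k.
Proof.
elim: k => [|k IHk] b12 //=.
rewrite IHk => [|i ik]; last exact/b12/ltnW.
by case: insubP => [j _ jk|_] //; rewrite b12 // jk.
Qed.

Lemma utility_le_choice b v i S : b i = v i ->
  v i S - price c (seqAlloc c b i) i S <= util c v b i.
Proof.
move=> bv; rewrite /util mechPayE mechAllocE /seqBundle bv.
exact: (lexArgmax_max (fun T => v i T - price c (seqAlloc c b i) i T)).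
Qed.

Lemma mechPay_le_bid b i : valuation (b i) -> mechPay c b i <= b i (mechAlloc c b i).
Proof.
case=> b0 _; have := utility_le_choice set0 (erefl (b i)).
by rewrite price_set0 ?seqAlloc_self // b0 /util; lra.
Qed.

Lemma mechPay_ge0 b i : (forall j, nondecreasing_cost (c j)) -> 0 <= mechPay c b i.
Proof. by move=> cmono; rewrite mechPayE price_ge0 ?seqAlloc_self. Qed.

Lemma sum_mechPay b : (forall j, c j set0 = 0) ->
  \sum_i mechPay c b i = cost c (mechAlloc c b).
Proof.
move=> c0; under eq_bigr => i _ do rewrite mechPayE /price -seqAllocS.
rewrite -(big_mkord xpredT
  (fun k => cost c (seqAlloc c b k.+1) - cost c (seqAlloc c b k))).
by rewrite telescope_sumr // [seqAlloc c b 0]/= cost_empty // subr0.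
Qed.

Lemma mech_wgsp v b d (Q : {set 'I_n}) : Q != set0 ->
  ~ (forall i, i \in Q -> util c v (override Q v b) i < util c v (override Q d b) i).
Proof.
case/set0Pn=> i1 i1Q gain.
have [i0 i0Q i0_first] := arg_minnP (fun i : 'I_n => nat_of_ord i) i1Q.
have same_prices : seqAlloc c (override Q v b) i0 = seqAlloc c (override Q d b) i0.
  apply: eq_seqAlloc => i ii0; rewrite /override; case: ifP => // iQ.
  by have := i0_first i iQ; rewrite leqNgt ii0.
have truthful : override Q v b i0 = v i0 by rewrite /override /= ifT.
pose A := mechAlloc c (override Q d b) i0.
have deviation : util c v (override Q d b) i0 =
    v i0 A - price c (seqAlloc c (override Q v b) i0) i0 A by rewrite same_prices.
have := utility_le_choice A truthful; rewrite -deviation.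
by move/le_lt_trans/(_ (gain i0 i0Q)); rewrite ltxx.
Qed.

Lemma socialCost_mech_le alpha v (A' : {ffun 'I_n -> {set 'I_m}}) :
  1 <= alpha -> (forall i, valuation (v i)) -> (forall j, c j set0 = 0) ->
  (forall j S, 0 <= c j S) -> (forall j, subadditive (c j)) ->
  (forall j, avg_max_bounded alpha (c j)) ->
  socialCost c v (mechAlloc c v) <= alpha * socialCost c v A'.
Proof.
move=> a1 vval c0 cge0 csub cavg.
rewrite /socialCost -sum_mechPay // -big_split /=.
set X := \sum_i (v i setT - v i (A' i)).
have X_ge0 : 0 <= X.
  apply: sumr_ge0 => i _; rewrite subr_ge0.
  by case: (vval i) => _; apply; apply: subsetT.
have util_A' : \sum_(i < n) (mechPay c v i + (v i setT - v i (mechAlloc c v i)))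
    <= X + \sum_(i < n) price c (seqAlloc c v i) i (A' i).
  rewrite /X -big_split /=; apply: ler_sum => i _.
  by have := utility_le_choice (A' i) (erefl (v i)); rewrite /util; lra.
have := sum_price_le_cost (Bs := fun i : 'I_n => seqAlloc c v i) A' c0 csub cavg
  (seqAlloc_self v).
have : 0 <= cost c A' by apply: sumr_ge0.
nra.
Qed.

End SequentialMechanism.

Theorem mainTheorem14 (R : realFieldType) (n m : nat) (alpha : R)
    (c : 'I_m -> {set 'I_n} -> R) :
  1 <= alpha ->
  (forall j, c j set0 = 0) ->
  (forall j S, 0 <= c j S) ->
  (forall j, nondecreasing_cost (c j)) ->
  (forall j, subadditive (c j)) ->
  (forall j, avg_max_bounded alpha (c j)) ->
  [/\ (* IR *)
      (forall b : 'I_n -> {set 'I_m} -> R, (forall i, valuation (b i)) ->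
         forall i, mechPay c b i <= b i (mechAlloc c b i)),
      (* NPT *)
      (forall b : 'I_n -> {set 'I_m} -> R, (forall i, valuation (b i)) ->
         forall i, 0 <= mechPay c b i),
      (* WGSP *)
      (forall (v b d : 'I_n -> {set 'I_m} -> R) (Q : {set 'I_n}),
         (forall i, valuation (v i)) -> (forall i, valuation (b i)) ->
         (forall i, valuation (d i)) -> Q != set0 ->
         ~ (forall i, i \in Q ->
              util c v (override Q v b) i < util c v (override Q d b) i)),
      (* budget balance *)
      (forall b : 'I_n -> {set 'I_m} -> R, (forall i, valuation (b i)) ->
         \sum_(i < n) mechPay c b i = cost c (mechAlloc c b)) &
      (* alpha-approximation of social cost, truthful reports *)
      (forall v : 'I_n -> {set 'I_m} -> R, (forall i, valuation (v i)) ->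
         forall A' : {ffun 'I_n -> {set 'I_m}},
           socialCost c v (mechAlloc c v) <= alpha * socialCost c v A')].
Proof.
move=> a1 c0 cge0 cmono csub cavg; split.
- by move=> b bval i; apply: mechPay_le_bid.
- by move=> b _ i; apply: mechPay_ge0.
- by move=> v b d Q _ _ _; apply: mech_wgsp.
- by move=> b _; apply: sum_mechPay.
- by move=> v vval A'; apply: socialCost_mech_le.
Qed.
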